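(* Let $n\ge 2$, let $q\in\{2,\dots,n\}$ and let $r_1,\dots,r_q\in\mathbb{N}$. Let $X\in\mathcal{H}_{0,r_1,\dots,r_q}$ satisfy $$B_1B_2\cdots B_q X=0 .$$ Then $X=0$.
   Context: Fix $n\ge 1$ and $s\ge 1$. For integers $k,l_1,\dots,l_s$, let $\mathcal{H}_{k,l_1,\dots,l_s}$ denote the real vector space of arrays $X^{J_1,\dots,J_s}_{i_1\dots i_k}$, where all indices range over $\{1,\dots,n\}$, each $J_\alpha=(j^{\alpha}_1,\dots,j^{\alpha}_{l_\alpha})$ is a string of $l_\alpha$ indices, the array is totally antisymmetric in $i_1,\dots,i_k$ and totally symmetric in the indices of each $J_\alpha$ separately. By convention $\mathcal{H}_{k,l_1,\dots,l_s}=0$ if some index $k,l_1,\dots,l_s$ is negative or if $k>n$. (Equivalently, $\mathcal{H}_{k,l_1,\dots,l_s}$ is the subspace of $\mathcal{F}^{-}(\mathbb{R}^n)\otimes\mathcal{F}^{+}(\mathbb{R}^n)^{\otimes s}$ with $k$ fermions and $l_\alpha$ bosons of type $\alpha$.) Denote by $\mathcal{S}^{+}_{a_1,\dots,a_p}$ (resp. $\mathcal{S}^{-}_{a_1,\dots,a_p}$) the symmetrization (resp. antisymmetrization) in the listed indices, normalized by $1/p!$. For $\alpha=1,\dots,s$ the operator $B_\alpha:\mathcal{H}_{k,l_1,\dots,l_s}\to\mathcal{H}_{k+1,l_1,\dots,l_\alpha+1,\dots,l_s}$ (in Fock language $B_\alpha=\sum_i b^{*}_{(\alpha)i}a^{*i}$)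 is defined by $$(B_\alpha X)^{J_1,\dots,J_{\alpha-1},\{j_0,j_1,\dots,j_l\},J_{\alpha+1},\dots,J_s}_{i_0i_1\dots i_k}=\mathcal{S}^{+}_{j_0,\dots,j_l}\,\mathcal{S}^{-}_{i_0,\dots,i_k}\,\delta^{j_0}_{i_0}\,X^{J_1,\dots,J_{\alpha-1},\{j_1,\dots,j_l\},J_{\alpha+1},\dots,J_s}_{i_1\dots i_k},$$ where $l=l_\alpha$ (the result is $0$ if $k+1>n$). *)

From mathcomp Require Import all_boot all_order all_algebra all_fingroup.
From mathcomp Require Import reals.
Set Implicit Arguments. Unset Strict Implicit. Unset Printing Implicit Defensive.
Import Order.TTheory GRing.Theory Num.Theory.
Local Open Scope ring_scope.

(* An array X^{J_1,...,J_s}_{i_1...i_k} is encoded as a function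
   X : seq 'I_n -> seq (seq 'I_n) -> R, where the first argument is the
   string of fermionic (lower) indices (i_1..i_k) and the second is the list
   [J_1; ...; J_s] of bosonic index strings.  Values at index data of the
   wrong shape are required to be 0 (see [inH]). *)
Definition arr (R : Type) (n : nat) := seq 'I_n -> seq (seq 'I_n) -> R.

Definition permseq (n : nat) (s : seq 'I_n) (sigma : 'S_(size s)) : seq 'I_n :=
  [seq tnth (in_tuple s) (sigma i) | i <- enum 'I_(size s)].

Definition inH (R : realType) (n : nat) (k : nat) (l : seq nat) (X : arr R n) : Prop :=
  [/\ (forall I J, X I J != 0 -> size I = k /\ map size J = l),
      (forall I J (sigma : 'S_(size I)),
          X (permseq sigma) J = (-1) ^+ odd_perm sigma * X I J)
    & (forall I J (a : nat) (tau : 'S_(size (nth [::] J a))), (a < size J)%N ->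
          X I (set_nth [::] J a (permseq tau)) = X I J)].

(* B_alpha, alpha = a+1 (0-based index a):
   (B X)^{..., {j0..jl}, ...}_{i0..ik} =
     S^+_{j0..jl} S^-_{i0..ik} delta^{j0}_{i0} X^{..., {j1..jl}, ...}_{i1..ik},
   with normalisations 1/(l+1)! and 1/(k+1)!. *)
Definition Bop (R : realType) (n : nat) (a : nat) (X : arr R n) : arr R n :=
  fun I J =>
    let Ja := nth [::] J a in
    if (0 < size I)%N && (a < size J)%N && (0 < size Ja)%N then
      (((size Ja)`!)%:R)^-1 * (((size I)`!)%:R)^-1 *
      \sum_(tau : 'S_(size Ja)) \sum_(sigma : 'S_(size I))
         (-1) ^+ odd_perm sigma *
         ((ohead (permseq sigma) == ohead (permseq tau))%:R *
          X (behead (permseq sigma)) (set_nth [::] J a (behead (permseq tau))))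
    else 0.

From mathcomp Require Import all_boot all_order all_algebra all_fingroup.
From mathcomp Require Import reals zify.
From Stdlib Require Import FunctionalExtensionality.

Import Order.TTheory GRing.Theory Num.Theory.
Set Implicit Arguments. Unset Strict Implicit. Unset Printing Implicit Defensive.
Local Open Scope ring_scope.

(* Number the boson types and the indices from 0, and call the weight of the
   bosonic strings J = (J_0, ..., J_{q-1}) the number of occurrences of the
   index b in J_b, summed over b < q.  Each B_b lowers the weight by at most
   one, and by exactly one only when it removes an index b from J_b.  Let X^J
   be a nonzero entry of X of maximal weight w.  In the entry of
   B_0 ... B_{q-1} X with fermionic indices (0, ..., q-1) and bosonic strings
   (b :: J_b)_b, of weight w + q, the only surviving terms are those in which
   every B_b strips the head b off the b-th string; each of them is a positive
   multiple of X^J, so this entry is nonzero. *)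

Lemma eq_from_nth_any (T : Type) (s1 s2 : seq T) : size s1 = size s2 ->
  (forall x0 i, (i < size s1)%N -> nth x0 s1 i = nth x0 s2 i) -> s1 = s2.
Proof.
case: s1 => [|x s1] in s2 *; first by move/esym/size0nil.
by move=> eq_sz eq_nth; apply: (eq_from_nth (x0 := x)) => // i; apply: eq_nth.
Qed.

Section PermSeq.

Variable n : nat.
Implicit Types s L K : seq 'I_n.

Lemma size_permseq s (sg : 'S_(size s)) : size (permseq sg) = size s.
Proof. by rewrite size_map size_enum_ord. Qed.

Lemma nth_permseq x0 s (sg : 'S_(size s)) i (lt_i : (i < size s)%N) :
  nth x0 (permseq sg) i = nth x0 s (sg (Ordinal lt_i)).
Proof.
rewrite (nth_map (Ordinal lt_i)) ?size_enum_ord // (tnth_nth x0).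
by congr (nth _ _ (sg _)); apply: ord_inj; rewrite /= nth_enum_ord.
Qed.

Lemma permseqP L K : reflect (exists p : 'S_(size K), L = permseq p) (perm_eq L K).
Proof.
have tupleE p : permseq p = [tuple tnth (in_tuple K) (p i) | i < size K] :> seq _.
  by rewrite /permseq /= enumT unlock /= ?ord_enumE.
apply: (iffP (@tuple_permP _ _ L (in_tuple K))) => -[p eq_L]; exists p;
  by rewrite eq_L tupleE.
Qed.

Lemma perm_permseq s (sg : 'S_(size s)) : perm_eq (permseq sg) s.
Proof. by apply/permseqP; exists sg. Qed.

Lemma permseq1 s : permseq (1%g : 'S_(size s)) = s.
Proof.
apply: eq_from_nth_any => [|x0 i lt_i]; first exact: size_permseq.
by rewrite size_permseq in lt_i; rewrite (nth_permseq _ _ lt_i) perm1.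
Qed.

Lemma permseqM s (rho : 'S_(size s)) (sg : 'S_(size (permseq rho))) :
  permseq (s := permseq rho) sg = permseq (cast_perm (size_permseq rho) sg * rho).
Proof.
have sz_sg : size (permseq sg) = size s by rewrite (size_permseq sg) size_permseq.
apply: eq_from_nth_any => [|x0 i]; first by rewrite sz_sg size_permseq.
rewrite sz_sg => lt_i.
have lt_i' : (i < size (permseq rho))%N by rewrite size_permseq.
have lt_sg : (sg (Ordinal lt_i') < size s)%N by rewrite -(size_permseq rho).
rewrite (nth_permseq _ _ lt_i') (nth_permseq _ _ lt_sg) (nth_permseq _ _ lt_i).
rewrite permM cast_permE; congr (nth _ _ (rho _)); apply: ord_inj => /=.
by congr (nat_of_ord (sg _)); apply: ord_inj.
Qed.

Lemma ohead_permseq x s (sg : 'S_(size s).+1) :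
  ohead (permseq (s := x :: s) sg) = Some (nth x (x :: s) (sg ord0)).
Proof. by rewrite /permseq enum_ordSl /= (tnth_nth x). Qed.

Lemma behead_permseq_lift0 x s (rho : 'S_(size s)) :
  behead (permseq (s := x :: s) (lift_perm ord0 ord0 rho)) = permseq rho.
Proof.
apply: eq_from_nth_any => [|x0 i]; first by rewrite size_behead !size_permseq.
rewrite size_behead size_permseq => lt_i.
have lt_Si : (i.+1 < size (x :: s))%N by [].
rewrite nth_behead (nth_permseq _ _ lt_Si) (nth_permseq _ _ lt_i).
have -> : Ordinal lt_Si = lift ord0 (Ordinal lt_i) by apply: ord_inj.
by rewrite lift_perm_lift.
Qed.

End PermSeq.

Lemma lift0_perm_surj k (s : 'S_k.+1) :
  s ord0 = ord0 -> exists rho : 'S_k, s = lift_perm ord0 ord0 rho.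
Proof.
move=> s0.
have s_lift j : {j' | s (lift ord0 j) = lift ord0 j'}.
  have ne_s0 : ord0 != s (lift ord0 j) by rewrite -{1}s0 (inj_eq perm_inj) neq_lift.
  by have [j' ? _] := unlift_some ne_s0; exists j'.
pose f j := sval (s_lift j).
have s_liftE j : s (lift ord0 j) = lift ord0 (f j) := svalP (s_lift j).
have f_inj : injective f.
  by move=> j1 j2 /(congr1 (lift ord0)); rewrite -!s_liftE => /perm_inj/lift_inj.
exists (perm f_inj); apply/permP => j.
case: (unliftP ord0 j) => [j'|] ->; last by rewrite lift_perm_id.
by rewrite lift_perm_lift permE s_liftE.
Qed.

Lemma big_lift0_perm (V : nmodType) k (G : 'S_k.+1 -> V) :
  \sum_(s : 'S_k.+1 | s ord0 == ord0) G s = \sum_(rho : 'S_k) G (lift_perm ord0 ord0 rho).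
Proof.
have lift0_inj : {in setT &, injective (@lift_perm k ord0 ord0)}.
  move=> r1 r2 _ _ eq_r; apply/permP => j; apply: (@lift_inj _ ord0).
  by rewrite -!(lift_perm_lift ord0) eq_r.
transitivity (\sum_(rho in setT) G (lift_perm ord0 ord0 rho)); last first.
  by apply: eq_bigl => rho; rewrite inE.
rewrite -(big_imset _ lift0_inj); apply: eq_bigl => s.
apply/eqP/imsetP => [/lift0_perm_surj[rho ->]|[rho _ ->]]; last exact: lift_perm_id.
by exists rho.
Qed.

Lemma odd_cast_perm m k (eq_mk : m = k) (mu : 'S_m) :
  odd_perm (cast_perm eq_mk mu) = odd_perm mu.
Proof. by case: k / eq_mk; rewrite cast_perm_id. Qed.

Section SignedSums.

Variables (R : pzRingType) (n : nat).
Implicit Types (F : seq 'I_n -> R) (s : seq 'I_n).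

Lemma signed_sum_permseq F s (rho : 'S_(size s)) :
  \sum_(sg : 'S_(size (permseq rho))) (-1) ^+ odd_perm sg * F (permseq sg) =
  (-1) ^+ odd_perm rho * \sum_(sg : 'S_(size s)) (-1) ^+ odd_perm sg * F (permseq sg).
Proof.
under eq_bigr do rewrite permseqM.
set e := size_permseq rho.
rewrite (reindex (cast_perm (esym e))); last first.
  by exists (cast_perm e) => mu _; rewrite ?cast_permK ?cast_permKV.
under eq_bigr do rewrite cast_permKV odd_cast_perm.
rewrite [in RHS](reindex_inj (mulIg rho)) mulr_sumr; apply: eq_bigr => mu _.
by rewrite odd_permM addbC signr_addb -!mulrA signrMK.
Qed.

Lemma signed_sum_head_fixed F (x : 'I_n) s :
  x \notin s ->
  (forall rho : 'S_(size s), F (permseq rho) = (-1) ^+ odd_perm rho * F s) ->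
  \sum_(sg : 'S_(size s).+1) (-1) ^+ odd_perm sg *
     ((ohead (permseq (s := x :: s) sg) == Some x)%:R *
      F (behead (permseq (s := x :: s) sg))) =
  (size s)`!%:R * F s.
Proof.
move=> x_s F_anti.
have head_x (sg : 'S_(size s).+1) :
    (ohead (permseq (s := x :: s) sg) == Some x) = (sg ord0 == ord0).
  rewrite ohead_permseq; case: (sg ord0) => -[|j] lt_j; first by rewrite !eqxx.
  apply/eqP => -[nth_x]; move: x_s; rewrite -nth_x mem_nth //.
under eq_bigr do rewrite head_x mulr_natl mulrnAr mulrb.
rewrite -big_mkcond big_lift0_perm.
under eq_bigr do rewrite behead_permseq_lift0 F_anti odd_lift_perm /= signrMK.
by rewrite sumr_const card_Sn mulr_natl.
Qed.

End SignedSums.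

Lemma Bop_permseq (R : realType) n a (Y : arr R n) I J (rho : 'S_(size I)) :
  Bop a Y (permseq rho) J = (-1) ^+ odd_perm rho * Bop a Y I J.
Proof.
rewrite /Bop.
have -> : (0 < size (permseq rho))%N = (0 < size I)%N by rewrite size_permseq.
have -> : ((size (permseq rho))`!)%:R = ((size I)`!)%:R :> R by rewrite size_permseq.
case: ifP => _; last by rewrite mulr0.
rewrite mulrCA; congr (_ * _); rewrite mulr_sumr; apply: eq_bigr => tau _.
exact: (signed_sum_permseq (fun L => (ohead L == ohead (permseq tau))%:R *
   Y (behead L) (set_nth [::] J a (behead (permseq tau))))).
Qed.

Definition diag_weight n q (J : seq (seq 'I_n)) : nat :=
  \sum_(b < q) count (fun x : 'I_n => x == b :> nat) (nth [::] J b).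

Lemma count_perm_behead (T : eqType) (p : pred T) (L K : seq T) : perm_eq L K ->
  count p K = (oapp p false (ohead L) + count p (behead L))%N.
Proof. by move/seq.permP => <-; case: L. Qed.

Lemma diag_weight_set_behead n q (J : seq (seq 'I_n)) a L :
  (a < q)%N -> perm_eq L (nth [::] J a) ->
  (diag_weight q (set_nth [::] J a (behead L)) +
     oapp (fun x : 'I_n => x == a :> nat) false (ohead L))%N = diag_weight q J.
Proof.
move=> lt_aq perm_L; rewrite /diag_weight (bigD1 (Ordinal lt_aq)) //=.
rewrite [in RHS](bigD1 (Ordinal lt_aq)) //= (count_perm_behead _ perm_L).
rewrite nth_set_nth /= eqxx.
under eq_bigr => b ne_ba.
  by rewrite nth_set_nth /= ifN; [over | rewrite -val_eqE in ne_ba].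
lia.
Qed.

Lemma diag_weight_le n q (J : seq (seq 'I_n)) :
  (diag_weight q J <= \sum_(b < q) nth 0 (map size J) b)%N.
Proof.
apply: leq_sum => b _; apply: leq_trans (count_size _ _) _.
have [lt_bJ|le_Jb] := ltnP b (size J); first by rewrite (nth_map [::]).
by rewrite !nth_default ?size_map.
Qed.

Definition Bchain (R : realType) n (X : arr R n) a q : arr R n :=
  foldr (fun b Y => Bop b Y) X (iota a (q - a)).

Section Chain.

Variables (R : realType) (n q : nat).
Implicit Types (X Y : arr R n) (J : seq (seq 'I_n)).

Lemma BchainS X a : (a < q)%N -> Bchain X a q = Bop a (Bchain X a.+1 q).
Proof. by move=> lt_aq; rewrite /Bchain -(subnSK lt_aq). Qed.

Lemma Bchain_id X : Bchain X q q = X.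
Proof. by rewrite /Bchain subnn. Qed.

Lemma Bchain_permseq X a :
  (forall I J (sg : 'S_(size I)), X (permseq sg) J = (-1) ^+ odd_perm sg * X I J) ->
  (a <= q)%N -> forall I J (rho : 'S_(size I)),
  Bchain X a q (permseq rho) J = (-1) ^+ odd_perm rho * Bchain X a q I J.
Proof.
move=> X_anti + I J rho; rewrite leq_eqVlt => /predU1P[->|lt_aq].
  by rewrite !Bchain_id.
by rewrite BchainS // Bop_permseq.
Qed.

Lemma Bop_vanish_above Y w a :
  (a < q)%N -> (forall I J, (w < diag_weight q J)%N -> Y I J = 0) ->
  forall I J, (w.+1 < diag_weight q J)%N -> Bop a Y I J = 0.
Proof.
move=> lt_aq Y_vanish I J lt_wJ; rewrite /Bop; case: ifP => _ //.
rewrite big1 ?mulr0 // => tau _; rewrite big1 // => sg _.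
rewrite Y_vanish ?mulr0 //.
have := diag_weight_set_behead lt_aq (perm_permseq tau).
by case: (oapp _ _ _) => /=; lia.
Qed.

Lemma Bchain_vanish_above X w a :
  (a <= q)%N -> (forall I J, (w < diag_weight q J)%N -> X I J = 0) ->
  forall I J, (w + (q - a) < diag_weight q J)%N -> Bchain X a q I J = 0.
Proof.
move=> + X_vanish; move Hd: (q - a)%N => d.
elim: d a Hd => [|d IH] a Hd le_aq I J lt_wJ.
  have -> : a = q by lia.
  by rewrite Bchain_id X_vanish // -(addn0 w).
have lt_aq : (a < q)%N by lia.
rewrite addnS in lt_wJ; rewrite BchainS //.
by apply: (Bop_vanish_above lt_aq _ I lt_wJ) => I' J' ?; apply: IH; lia.
Qed.

End Chain.

Lemma sumr_gt0 (R : numDomainType) (I : finType) (F : I -> R) i0 :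
  (forall i, 0 <= F i) -> 0 < F i0 -> 0 < \sum_i F i.
Proof.
move=> F_ge0 F_i0; rewrite (bigD1 i0) //=; apply: lt_le_trans F_i0 _.
by rewrite lerDl sumr_ge0.
Qed.

Definition diag_seq n a q : seq 'I_n.+1 := [seq inord b | b <- iota a (q - a)].

Definition behead_from n a (J : seq (seq 'I_n)) : seq (seq 'I_n) :=
  mkseq (fun b => if (a <= b)%N then behead (nth [::] J b) else nth [::] J b) (size J).

Lemma diag_seqS n a q : (a < q)%N -> diag_seq n a q = inord a :: diag_seq n a.+1 q.
Proof. by move=> lt_aq; rewrite /diag_seq -(subnSK lt_aq). Qed.

Lemma diag_seq_notin n a q :
  (q <= n.+1)%N -> (a < q)%N -> (inord a : 'I_n.+1) \notin diag_seq n a.+1 q.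
Proof.
move=> le_qn lt_aq; apply/mapP => -[b]; rewrite mem_iota => b_range /(congr1 val).
by rewrite /= !inordK; lia.
Qed.

Lemma behead_from_id n a (J : seq (seq 'I_n)) : (size J <= a)%N -> behead_from a J = J.
Proof.
move=> le_Ja; apply: (@eq_from_nth _ [::]) => [|b]; rewrite size_mkseq // => lt_bJ.
by rewrite nth_mkseq // leqNgt (leq_trans lt_bJ le_Ja).
Qed.

Lemma behead_from_set_nth n a (J : seq (seq 'I_n)) L : (a < size J)%N ->
  behead_from a.+1 (set_nth [::] J a L) = set_nth [::] (behead_from a J) a L.
Proof.
move=> lt_aJ; apply: (@eq_from_nth _ [::]) => [|b].
  by rewrite size_mkseq !size_set_nth size_mkseq.
rewrite size_mkseq size_set_nth => lt_bJ.
have {}lt_bJ : (b < size J)%N by rewrite (maxn_idPr lt_aJ) in lt_bJ.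
rewrite nth_mkseq ?size_set_nth ?(maxn_idPr lt_aJ) // !nth_set_nth /= nth_mkseq //.
by case: (ltngtP b a).
Qed.

Section DiagonalEntry.

Variables (R : realType) (n q : nat).

Lemma Bop_diag_pos (Y : arr R n) t a (x : 'I_n) (s : seq 'I_n) J V :
  (a < q)%N -> x = a :> nat -> x \notin s -> ohead (nth [::] J a) = Some x ->
  (t < diag_weight q J)%N ->
  (forall I K (rho : 'S_(size I)), Y (permseq rho) K = (-1) ^+ odd_perm rho * Y I K) ->
  (forall I K, (t < diag_weight q K)%N -> Y I K = 0) ->
  (forall L, perm_eq L (nth [::] J a) -> ohead L = Some x ->
     0 < Y s (set_nth [::] J a (behead L)) * V) ->
  0 < Bop a Y (x :: s) J * V.
Proof.
move=> lt_aq x_a x_s Ja_x lt_tJ Y_anti Y_vanish pos_x.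
have lt_aJ : (a < size J)%N.
  by case: ltnP => // le_Ja; rewrite nth_default in Ja_x.
have Ja_gt0 : (0 < size (nth [::] J a))%N by move: Ja_x; case: (nth [::] J a).
rewrite /Bop /= lt_aJ Ja_gt0 -!mulrA.
do 2!(apply: mulr_gt0; first by rewrite invr_gt0 ltr0n fact_gt0).
have head_x_sum (tau : 'S_(size (nth [::] J a))) : ohead (permseq tau) = Some x ->
    0 < Y s (set_nth [::] J a (behead (permseq tau))) * V ->
    0 < (\sum_(sg : 'S_(size s).+1) (-1) ^+ odd_perm sg *
      ((ohead (permseq (s := x :: s) sg) == ohead (permseq tau))%:R *
       Y (behead (permseq (s := x :: s) sg))
         (set_nth [::] J a (behead (permseq tau))))) * V.
  move=> tau_x pos_tau; rewrite tau_x.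
  rewrite (signed_sum_head_fixed (F := Y^~ _) x_s (fun rho => Y_anti _ _ rho)).
  by rewrite -mulrA pmulr_rgt0 ?ltr0n ?fact_gt0.
rewrite mulr_suml; apply: (sumr_gt0 (i0 := 1%g)) => [tau|]; last first.
  by apply: head_x_sum; rewrite permseq1 //; apply: pos_x.
have [tau_x|tau_nx] := eqVneq (ohead (permseq tau)) (Some x).
  exact/ltW/head_x_sum/pos_x/tau_x/perm_permseq.
(* A term in which J_a does not give up its head x keeps the weight of J. *)
rewrite big1 ?mul0r // => sg _; rewrite Y_vanish ?mulr0 //.
have := diag_weight_set_behead lt_aq (perm_permseq tau).
case: (ohead (permseq tau)) tau_nx => [y ne_yx|_] /=; last by rewrite addn0 => ->.
have -> : (y == a :> nat) = false.
  by apply: contraNF ne_yx; rewrite -x_a val_eqE => /eqP ->.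
by rewrite addn0 => ->.
Qed.

End DiagonalEntry.

Section Positivity.

Variables (R : realType) (n q : nat) (X : arr R n.+1).
Hypothesis le_qn : (q <= n.+1)%N.
Hypothesis X_anti : forall I J (sg : 'S_(size I)),
  X (permseq sg) J = (-1) ^+ odd_perm sg * X I J.
Hypothesis X_sym : forall I J a (tau : 'S_(size (nth [::] J a))), (a < size J)%N ->
  X I (set_nth [::] J a (permseq tau)) = X I J.

Lemma X_behead_from_set_nth a I J L : (a < size J)%N ->
  perm_eq L (nth [::] J a) -> ohead L = ohead (nth [::] J a) ->
  X I (behead_from a.+1 (set_nth [::] J a (behead L))) = X I (behead_from a J).
Proof.
move=> lt_aJ perm_L head_L; rewrite behead_from_set_nth //.
have /permseqP[tau ->] : perm_eq (behead L) (nth [::] (behead_from a J) a).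
  rewrite nth_mkseq // leqnn.
  case: L (nth [::] J a) perm_L head_L => [|y L] [|z K] // perm_yz [eq_yz].
  by rewrite eq_yz perm_cons in perm_yz.
by apply: X_sym; rewrite size_mkseq.
Qed.

Lemma Bchain_diag_pos w a J :
  (forall I J, (w < diag_weight q J)%N -> X I J = 0) ->
  (a <= q)%N -> size J = q ->
  (forall b, (a <= b < q)%N -> ohead (nth [::] J b) = Some (inord b)) ->
  (w + (q - a) <= diag_weight q J)%N -> X [::] (behead_from a J) != 0 ->
  0 < Bchain X a q (diag_seq n a q) J * X [::] (behead_from a J).
Proof.
move=> X_vanish + sz_J; move Hd: (q - a)%N => d.
elim: d a Hd J sz_J => [|d IH] a Hd J sz_J le_aq heads le_wJ XJ_neq0.
  have eq_aq : a = q by lia.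
  rewrite eq_aq Bchain_id /diag_seq subnn behead_from_id ?sz_J // in XJ_neq0 *.
  by rewrite -expr2 exprn_even_gt0 //= XJ_neq0 orbT.
have lt_aq : (a < q)%N by lia.
have inord_a : (inord a : 'I_n.+1) = a :> nat by rewrite inordK //; lia.
have head_a : ohead (nth [::] J a) = Some (inord a) by apply: heads; lia.
rewrite BchainS // diag_seqS //.
apply: (Bop_diag_pos (q := q) (t := w + (q - a.+1))) => //.
- exact: diag_seq_notin.
- by lia.
- exact: Bchain_permseq.
- exact: Bchain_vanish_above.
move=> L perm_L head_L.
have lt_aJ : (a < size J)%N by rewrite sz_J.
rewrite -(X_behead_from_set_nth _ lt_aJ perm_L) ?head_L //; apply: IH => //.
- by lia.
- by rewrite size_set_nth sz_J (maxn_idPr lt_aq).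
- move=> b /andP[lt_ab lt_bq]; rewrite nth_set_nth /= ifN; last by lia.
  by apply: heads; lia.
- have := diag_weight_set_behead lt_aq perm_L.
  by rewrite head_L /= inord_a eqxx; lia.
- by rewrite X_behead_from_set_nth ?head_L.
Qed.

Lemma X_vanish_at_top_weight w :
  (forall I J, X I J != 0 -> I = [::] /\ size J = q) ->
  (forall I J, Bchain X 0 q I J = 0) ->
  (forall I J, (w < diag_weight q J)%N -> X I J = 0) ->
  forall I J, diag_weight q J = w -> X I J = 0.
Proof.
move=> X_supp B_eq0 X_vanish I J wt_J; have [//|XJ_neq0] := eqVneq (X I J) 0.
have [eq_I sz_J] := X_supp _ _ XJ_neq0; rewrite eq_I in XJ_neq0.
pose Jh := mkseq (fun b => (inord b : 'I_n.+1) :: nth [::] J b) q.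
have Jh_J : behead_from 0 Jh = J.
  apply: (@eq_from_nth _ [::]) => [|b]; rewrite !size_mkseq ?sz_J // => lt_bq.
  by rewrite nth_mkseq ?size_mkseq // nth_mkseq.
have wt_Jh : diag_weight q Jh = (w + q)%N.
  rewrite -wt_J /diag_weight addnC -[X in (X + _)%N]muln1 -[X in (X * _)%N]card_ord.
  rewrite -sum_nat_const -big_split; apply: eq_bigr => b _.
  rewrite nth_mkseq //= inordK ?eqxx //; exact: leq_trans (ltn_ord b) le_qn.
have heads b : (0 <= b < q)%N -> ohead (nth [::] Jh b) = Some (inord b).
  by case/andP => _ lt_bq; rewrite nth_mkseq.
have := Bchain_diag_pos X_vanish (leq0n q) (size_mkseq _ _) heads.
by rewrite Jh_J wt_Jh subn0 B_eq0 mul0r ltxx => /(_ (leqnn _) XJ_neq0).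
Qed.

End Positivity.

Theorem mainTheorem1 (R : realType) (n q : nat) (r : seq nat) (X : arr R n) :
  (2 <= n)%N -> (2 <= q <= n)%N -> size r = q ->
  inH 0 r X ->
  foldr (fun a Y => Bop a Y) X (iota 0 q) = (fun _ _ => 0) ->
  X = (fun _ _ => 0).
Proof.
case: n X => [//|n] X _ /andP[_ le_qn] sz_r [X_supp X_anti X_sym] B_eq0.
have supp I J : X I J != 0 -> I = [::] /\ size J = q.
  by case/X_supp => /size0nil -> /(congr1 size); rewrite size_map sz_r.
have B_eq0' I J : Bchain X 0 q I J = 0 by rewrite /Bchain subn0 B_eq0.
pose M := (\sum_(b < q) nth 0 r b)%N.
suff vanish k I J : (M < diag_weight q J + k)%N -> X I J = 0.
  apply: functional_extensionality => I; apply: functional_extensionality => J.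
  by apply: (vanish M.+1); lia.
elim: k I J => [|k IH] I J lt_M.
  have [//|/X_supp[_ sz_J]] := eqVneq (X I J) 0.
  by have := diag_weight_le q J; rewrite sz_J; lia.
apply: (X_vanish_at_top_weight le_qn X_anti X_sym supp B_eq0' (w := diag_weight q J)) => //.
by move=> I' J' lt_J'; apply: IH; lia.
Qed.
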